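(* Let $p,q\in\{1,\dots,n\}$ and integers $m\ge l$. If $u\in\mathcal{M}(Y_p(m))$ and $v\in\mathcal{M}(Y_q(l))$ are such that $u\cdot v$ is a highest weight vector in $\mathcal{M}(Y_p(m))\cdot\mathcal{M}(Y_q(l))$, then $u=Y_p(m)$.
   Context: Fix $n\ge 2$ and type $C_n$ with $I=\{1,\dots,n\}$ and fundamental weights $\Lambda_i$. Let $\mathcal{M}$ be the set of Laurent monomials $M=\prod_{i\in I,k\in\mathbb{Z}}Y_i(k)^{y_i(k)}$ ($y_i(k)\in\mathbb{Z}$, finitely many nonzero); put $Y_0(k)=Y_{n+1}(k)=1$, $A_i(k)=Y_i(k)Y_i(k+1)Y_{i-1}(k+1)^{-1}Y_{i+1}(k)^{-1}$ ($i\ne n$), $A_n(k)=Y_n(k)Y_n(k+1)Y_{n-1}(k+1)^{-2}$. Crystal structure: $\mathrm{wt}(M)=\sum_i(\sum_k y_i(k))\Lambda_i$, $\varphi_i(M)=\max_k\sum_{j\le k}y_i(j)$, $\varepsilon_i(M)=\max_k(-\sum_{j>k}y_i(j))$; $\tilde f_iM=0$ if $\varphi_i(M)=0$, else $A_i(n_f)^{-1}M$ with $n_f=\min\{k:\varphi_i(M)=\sum_{j\le k}y_i(j)\}$; $\tilde e_iM=0$ if $\varepsilon_i(M)=0$, else $A_i(n_e)M$ with $n_e=\max\{k:\varphi_i(M)=\sum_{j\le k}y_i(j)\}$. A highest weight vector is a monomial $M$ with $\varepsilon_i(M)=0$ for all $i\in I$. For a highest weight monomial $Y$, $\mathcal{M}(Y)$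 is the connected component of $\mathcal{M}$ containing $Y$. For $S,T\subset\mathcal{M}$, $S\cdot T=\{M_1M_2:M_1\in S,M_2\in T\}$, with the crystal structure induced from $\mathcal{M}$. *)

(* Monomials in the Y_i(k) are elements of the free abelian
   group {freeg (nat * int) / int} (multinomials' freeg): the monomial
   prod Y_i(k)^{y_i(k)} is \sum y_i(k) <<(i,k)>>, so monomial multiplication
   is addition, and y_i(k) = coeff (i,k) M. *)
From HB Require Import structures.
From mathcomp Require Import all_boot all_order all_algebra.
From mathcomp.multinomials Require Import freeg.
Set Implicit Arguments.
Unset Strict Implicit.
Unset Printing Implicit Defensive.
Import Order.TTheory GRing.Theory Num.Theory.
Local Open Scope ring_scope.

Definition mono := {freeg (nat * int)%type / int}.

Section Crystal.
Variable n : nat.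

Definition inI (i : nat) : bool := (1 <= i <= n)%N.

Definition yexp (M : mono) (i : nat) (k : int) : int := coeff (i, k) M.

(* the monomial Y_i(k); Y_0(k) = Y_{n+1}(k) = 1 (the unit, i.e. 0 here) *)
Definition Y (i : nat) (k : int) : mono := if inI i then << (i, k) >> else 0.

(* A_i(k), type C_n *)
Definition A (i : nat) (k : int) : mono :=
  if i == n then Y n k + Y n (k + 1) - (Y n.-1 (k + 1) *+ 2)
  else Y i k + Y i (k + 1) - Y i.-1 (k + 1) - Y i.+1 k.

Definition psum (M : mono) (i : nat) (k : int) : int :=
  \sum_(x <- dom M | (x.1 == i) && (x.2 <= k)) coeff x M.

Definition tsum (M : mono) (i : nat) (k : int) : int :=
  \sum_(x <- dom M | (x.1 == i) && (k < x.2)) coeff x M.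

Definition is_phi (M : mono) (i : nat) (c : int) : Prop :=
  (exists k, psum M i k = c) /\ (forall k, psum M i k <= c).

Definition is_eps (M : mono) (i : nat) (c : int) : Prop :=
  (exists k, - tsum M i k = c) /\ (forall k, - tsum M i k <= c).

Definition fstep (i : nat) (M N : mono) : Prop :=
  exists c nf, [/\ is_phi M i c, 0 < c, psum M i nf = c,
    (forall k, psum M i k = c -> nf <= k) & N = M - A i nf].

Definition estep (i : nat) (M N : mono) : Prop :=
  exists e c ne, [/\ is_eps M i e, 0 < e, is_phi M i c &
    [/\ psum M i ne = c, (forall k, psum M i k = c -> k <= ne) & N = M + A i ne]].

Definition cedge (M N : mono) : Prop :=
  exists i, inI i /\ [\/ fstep i M N, estep i M N, fstep i N M | estep i N M].

Inductive mcomp (Y0 : mono) : mono -> Prop :=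
| mcomp_refl : mcomp Y0 Y0
| mcomp_step M N : mcomp Y0 M -> cedge M N -> mcomp Y0 N.

Definition highest (M : mono) : Prop := forall i, inI i -> is_eps M i 0.

End Crystal.

(* The monomials of M(Y_p(m)) are among those of the Kashiwara-Nakashima columns of height p:
   the column 1, ..., p gives Y_p(m), and column monomials are closed under every crystal
   edge, because a positive (negative) exponent of Y_i(t) in a column monomial is never
   cancelled inside the column, so it comes from a letter that can be moved one step up
   (down) along an i-arrow, which multiplies the monomial by A_i(t)^-1 (by A_i(t)).
   Moving letters down one at a time then writes u as Y_p(m) times factors A_i(t)^-1
   with t >= m, and v as Y_q(l) times such factors with t >= l. If u <> Y_p(m), let
   A_i(t)^-1 be the factor of u v with the lexicographically largest (t, i): since
   t >= m >= l, the last nonzero exponent of row i in u v is the one of Y_i(t + 1), and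
   it is negative, so eps_i(u v) > 0. *)

From HB Require Import structures.
From mathcomp Require Import all_boot all_order all_algebra.
From mathcomp.multinomials Require Import freeg.
From mathcomp Require Import zify ring.
Import Order.TTheory GRing.Theory Num.Theory.
Local Open Scope ring_scope.

Set Implicit Arguments.
Unset Strict Implicit.
Unset Printing Implicit Defensive.

Ltac mono_eq := apply/eqP/freeg_eqP => ?;
  rewrite ?(coeffD, coeffN, coeffB, coeffMn, coeff0); ring.

Lemma sumr_gt0_witness (R : realDomainType) (I : eqType) (r : seq I) (F : I -> R) :
  0 < \sum_(i <- r) F i -> exists2 i, i \in r & 0 < F i.
Proof.
have [/hasP // | /hasPn F_le0] := boolP (has (fun i => 0 < F i) r).
rewrite big_seq ltNge sumr_le0 // => i /F_le0; by rewrite -leNgt.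
Qed.

Lemma sumr_lt0_witness (R : realDomainType) (I : eqType) (r : seq I) (F : I -> R) :
  \sum_(i <- r) F i < 0 -> exists2 i, i \in r & F i < 0.
Proof.
rewrite -oppr_gt0 -sumrN => /sumr_gt0_witness[i ir]; rewrite oppr_gt0.
by exists i.
Qed.

Lemma exists_argmax_seq (d : Order.disp_t) (T : orderType d) (X : eqType)
    (f : X -> T) (s : seq X) :
  s != [::] -> exists2 y, y \in s & forall x, x \in s -> (f x <= f y)%O.
Proof.
elim: s => [|a s IH] // _; case: (altP (s =P [::])) => [-> | /IH[y ys y_max]].
  by exists a => [|x]; rewrite ?mem_seq1 // => /eqP ->.
have [le_ya | le_ay] := leP (f y) (f a).
  exists a => [|x]; rewrite ?mem_head // in_cons => /predU1P[-> // | xs].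
  exact: le_trans (y_max x xs) le_ya.
exists y => [|x]; first by rewrite in_cons ys orbT.
by rewrite in_cons => /predU1P[-> | /y_max //]; apply: ltW.
Qed.

Lemma coeff_Y n j t i k :
  coeff (i, k) (Y n j t) = (inI n j && (j == i) && (t == k))%:R.
Proof.
rewrite /Y; case: (inI n j) => /=; last by rewrite coeff0.
by rewrite coeffU mul1r xpair_eqE.
Qed.

Lemma coeff_A_succ n i j t : inI n j -> (j <= i)%N ->
  coeff (i, t + 1) (A n j t) = (j == i)%:R.
Proof.
move=> jI le_ji; have /andP[j_gt0 _] := jI.
have [/negbTE t_t1 /negbTE j1_i] : (t != t + 1) /\ (j.-1 != i) by lia.
rewrite /A; case: ifP => [/eqP jn | _]; first subst j;
rewrite !(coeffB, coeffD, coeffMn) !coeff_Y t_t1 j1_i !andbF !eqxx ?andbT jI /=;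
by rewrite ?subr0 ?add0r ?addr0.
Qed.

Lemma coeff_A_diag n i t : inI n i -> coeff (i, t) (A n i t) = 1.
Proof.
move=> iI; have [/negbTE t1_t /negbTE i1_i] : (t + 1 != t) /\ (i.+1 != i) by lia.
rewrite /A; case: ifP => [/eqP in_ | _]; first subst i;
rewrite !(coeffB, coeffD, coeffMn) !coeff_Y t1_t ?i1_i !andbF !eqxx iI /=;
by rewrite ?subr0 ?add0r ?addr0.
Qed.

Lemma coeff_A_gt n i j t k : t + 1 < k -> coeff (i, k) (A n j t) = 0.
Proof.
move=> lt_tk; have [/negbTE t_k /negbTE t1_k] : (t != k) /\ (t + 1 != k) by lia.
rewrite /A; case: ifP => _;
by rewrite !(coeffB, coeffD, coeffMn) !coeff_Y t_k t1_k !andbF ?subr0 ?addr0 ?mul0rn.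
Qed.

(** * Crystal operators and exponents *)

Lemma sum_dom_pred1 (M : mono) a : \sum_(x <- dom M | x == a) coeff x M = coeff a M.
Proof.
rewrite -big_filter; have [a_dom | a_ndom] := boolP (a \in dom M).
  by rewrite (filter_pred1_uniq (uniq_dom M) a_dom) big_seq1.
rewrite coeff_outdom // big1_seq // => x; rewrite mem_filter => /and3P[_ /eqP ->].
by rewrite (negbTE a_ndom).
Qed.

Lemma psum_diff (M : mono) i k : psum M i k - psum M i (k - 1) = coeff (i, k) M.
Proof.
rewrite /psum (bigID (fun x : nat * int => x.2 <= k - 1)) /= -sum_dom_pred1 addrAC.
have -> : \sum_(x <- dom M | (x.1 == i) && (x.2 <= k) && (x.2 <= k - 1)) coeff x M =
          \sum_(x <- dom M | (x.1 == i) && (x.2 <= k - 1)) coeff x M.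
  by apply: eq_bigl => -[a b] /=; case: (a == i) => //=; apply/idP/idP; lia.
rewrite subrr add0r; apply: eq_bigl => -[a b] /=; rewrite xpair_eqE.
by case: (a == i) => //=; apply/idP/idP; lia.
Qed.

Lemma tsum_last (M : mono) i K :
  (forall k, K < k -> coeff (i, k) M = 0) -> tsum M i (K - 1) = coeff (i, K) M.
Proof.
move=> M_zero; rewrite /tsum -sum_dom_pred1 big_seq_cond [RHS]big_seq_cond.
apply: eq_bigl => -[a b] /=; rewrite xpair_eqE.
have [ab_dom | ] //= := boolP ((a, b) \in dom M); case: eqP => //= a_i; subst a.
apply/idP/idP => [lt_b | /eqP -> ]; last lia.
by have [/M_zero | ] := ltrP K b; [move: ab_dom; rewrite mem_dom => /eqP | lia].
Qed.

Lemma highest_last_coeff_ge0 n (M : mono) i K : highest n M -> inI n i ->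
  (forall k, K < k -> coeff (i, k) M = 0) -> 0 <= coeff (i, K) M.
Proof.
move=> M_high iI M_zero; have [_ eps_le0] := M_high i iI.
by rewrite -(tsum_last M_zero) -oppr_le0 eps_le0.
Qed.

Lemma fstep_coeff n i (M N : mono) :
  fstep n i M N -> exists t, 0 < coeff (i, t) M /\ N = M - A n i t.
Proof.
case=> c [t [[_ psum_le] _ psum_t t_min ->]]; exists t; split=> //.
rewrite -psum_diff psum_t subr_gt0 lt_neqAle psum_le andbT.
by apply/eqP => /t_min; lia.
Qed.

Lemma estep_coeff n i (M N : mono) :
  estep n i M N -> exists t, coeff (i, t + 1) M < 0 /\ N = M + A n i t.
Proof.
case=> _ [c [t [_ _ [_ psum_le] [psum_t t_max ->]]]]; exists t; split=> //.
rewrite -psum_diff addrK psum_t subr_lt0 lt_neqAle psum_le andbT.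
by apply/eqP => /t_max; lia.
Qed.

Lemma fstep_coeff_rev n i (M N : mono) : inI n i ->
  fstep n i N M -> exists t, coeff (i, t + 1) M < 0 /\ N = M + A n i t.
Proof.
move=> iI [c [t [[_ psum_le] _ psum_t _ ->]]]; exists t; split; last by rewrite subrK.
rewrite coeffB coeff_A_succ // eqxx mulr1n -psum_diff addrK psum_t subr_lt0.
by apply: le_lt_trans ltr01; rewrite subr_le0.
Qed.

Lemma estep_coeff_rev n i (M N : mono) : inI n i ->
  estep n i N M -> exists t, 0 < coeff (i, t) M /\ N = M - A n i t.
Proof.
move=> iI [_ [c [t [_ _ [_ psum_le] [psum_t _ ->]]]]]; exists t; split; last by rewrite addrK.
rewrite coeffD coeff_A_diag // -psum_diff psum_t.
by apply: ltr_wpDl ltr01; rewrite subr_ge0.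
Qed.

Lemma cedge_coeff n (M N : mono) : cedge n M N -> exists i t, inI n i /\
  ((0 < coeff (i, t) M /\ N = M - A n i t) \/ (coeff (i, t + 1) M < 0 /\ N = M + A n i t)).
Proof.
case=> i [iI [/fstep_coeff | /estep_coeff | /(fstep_coeff_rev iI) | /(estep_coeff_rev iI)]] [t tP];
exists i, t; split=> //; by [left | right].
Qed.

Definition sumA n (L : seq (nat * int)) : mono := \sum_(x <- L) A n x.1 x.2.

Lemma sumA_cat n L1 L2 : sumA n (L1 ++ L2) = sumA n L1 + sumA n L2.
Proof. exact: big_cat. Qed.

Lemma sumA_last_coeff_gt0 n (L : seq (nat * int)) x0 :
  x0 \in L -> (forall x, x \in L -> inI n x.1) ->
  exists i K, [/\ inI n i, x0.2 < K, 0 < coeff (i, K) (sumA n L) &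
                  forall k, K < k -> coeff (i, k) (sumA n L) = 0].
Proof.
move=> x0_in L_inI; have L_neq0 : L != [::] by apply: contraTneq x0_in => ->.
have [y y_in y_max] := exists_argmax_seq (fun x : nat * int => x.2) L_neq0.
have top_neq0 : [seq x <- L | x.2 == y.2] != [::].
  by apply/eqP => /(congr1 (fun s => y \in s)); rewrite mem_filter eqxx y_in.
have [z] := exists_argmax_seq (fun x : nat * int => x.1) top_neq0.
rewrite mem_filter => /andP[/eqP z2 z_in] z_max.
have coeff_top x : x \in L ->
    coeff (z.1, y.2 + 1) (A n x.1 x.2) = ((x.2 == y.2) && (x.1 == z.1))%:R.
  move=> x_in; have := y_max x x_in; rewrite le_eqVlt => /predU1P[x2 | lt_x2].
    have le_x1 : (x.1 <= z.1)%N by apply: z_max; rewrite mem_filter x2 eqxx.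
    by rewrite x2 eqxx coeff_A_succ ?L_inI.
  by rewrite coeff_A_gt ?(lt_eqF lt_x2) // ltrD2r.
exists z.1, (y.2 + 1); split.
- exact: L_inI.
- by rewrite ltzD1 y_max.
- rewrite raddf_sum (eq_big_seq _ coeff_top) (big_rem _ z_in) /= z2 !eqxx.
  by apply: lt_le_trans ltr01 _; rewrite lerDl sumr_ge0.
- move=> k lt_k; rewrite raddf_sum big1_seq // => x /andP[_ x_in].
  by apply: coeff_A_gt; apply: le_lt_trans lt_k; rewrite lerD2r y_max.
Qed.

Lemma sub_sumA_not_highest n (B : mono) L t0 :
  (forall i k, t0 < k -> coeff (i, k) B = 0) -> (exists2 x, x \in L & t0 <= x.2) ->
  (forall x, x \in L -> inI n x.1) -> ~ highest n (B - sumA n L).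
Proof.
move=> B_zero [x0 x0_in le_t0] L_inI M_high.
have [i [K [iI lt_K top_gt0 top_last]]] := sumA_last_coeff_gt0 x0_in L_inI.
have B_zero_K k : K <= k -> coeff (i, k) B = 0.
  by move=> le_k; apply: B_zero; apply: le_lt_trans le_t0 (lt_le_trans lt_K le_k).
have M_last k : K < k -> coeff (i, k) (B - sumA n L) = 0.
  by move=> lt_k; rewrite coeffB B_zero_K ?top_last ?subr0 // ltW.
have := highest_last_coeff_ge0 M_high iI M_last.
by rewrite coeffB B_zero_K // sub0r oppr_ge0 leNgt top_gt0.
Qed.

(** * Kashiwara-Nakashima columns *)

Section Columns.
Variable n : nat.

(* Letters 1 < ... < n < \bar n < ... < \bar 1 are encoded as 1, ..., 2n; the crystal
   of the vector representation has the arrows v --(colour v)--> v + 1, and [box v T]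
   is the monomial of the one-box tableau v with parameter T (for the letter \bar i,
   i.e. v = 2n + 1 - i, it is Y_{i-1}(T + n - i + 1) Y_i(T + n - i + 1)^-1). The
   truncated subtraction in [shift] makes it vanish on the unbarred letters. *)
Definition colour (v : nat) : nat := if (v <= n)%N then v else (n.*2 - v)%N.

Definition shift (v : nat) : int := (v - n)%N.

Definition box (v : nat) (T : int) : mono :=
  Y n (colour v) (T + shift v) - Y n (colour v.-1) (T + shift v.-1 + 1).

Lemma colour_inI v : (0 < v < n.*2)%N -> inI n (colour v).
Proof. by rewrite /inI /colour; case: ifP; lia. Qed.

Lemma box_succ v T : (0 < v < n.*2)%N ->
  box v.+1 T = box v T - A n (colour v) (T + shift v).
Proof.
move=> /andP[v_gt0 lt_v2n]; rewrite /box /A.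
have [lt_vn | lt_nv | ->] := ltngtP v n.
- have [-> -> ->] : [/\ colour v.+1 = v.+1, colour v = v & colour v.-1 = v.-1].
    by rewrite /colour; split; case: ifP => ?; lia.
  have [-> -> ->] : [/\ shift v.+1 = 0, shift v = 0 & shift v.-1 = 0] by rewrite /shift; split; lia.
  by rewrite ifN; [mono_eq | lia].
- have [-> ->] : colour v.+1 = (colour v).-1 /\ colour v.-1 = (colour v).+1.
    by rewrite /colour; split; do 2 case: ifP => ?; lia.
  have [-> ->] : T + shift v.+1 = T + shift v + 1 /\ T + shift v.-1 + 1 = T + shift v.
    by rewrite /shift; split; lia.
  by rewrite ifN; [mono_eq | rewrite /colour ifN; lia].
- have [-> -> ->] : [/\ colour n.+1 = n.-1, colour n = n & colour n.-1 = n.-1].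
    by rewrite /colour; split; case: ifP => ?; lia.
  have [-> -> ->] : [/\ shift n.+1 = 1, shift n = 0 & shift n.-1 = 0] by rewrite /shift; split; lia.
  by rewrite eqxx !addr0; mono_eq.
Qed.

Lemma coeff_box i t v T : inI n i -> coeff (i, t) (box v T) =
  ((colour v == i) && (T + shift v == t))%:R -
  ((colour v.-1 == i) && (T + shift v.-1 + 1 == t))%:R.
Proof.
move=> iI; have inI_eq j : inI n j && (j == i) = (j == i).
  by case: eqP => [-> |]; rewrite ?andbT ?andbF.
by rewrite coeffB !coeff_Y !inI_eq.
Qed.

Definition relabel (v w : nat) (cs : seq nat) : seq nat :=
  [seq if x == v then w else x | x <- cs].

Lemma relabelK v w cs : w \notin cs -> relabel w v (relabel v w cs) = cs.
Proof.
move=> w_notin; rewrite /relabel -map_comp map_id_in // => x x_in /=.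
case: (x =P v) => [-> | _]; first by rewrite eqxx.
by rewrite ifN //; apply: contraNneq w_notin => <-.
Qed.

Lemma mem_relabel v w cs : v \in cs -> w \in relabel v w cs.
Proof. by move=> v_in; apply/mapP; exists v; rewrite ?eqxx. Qed.

Lemma relabel_notin v w cs : v != w -> v \notin relabel v w cs.
Proof.
move=> v_w; apply/mapP => -[x _]; case: eqP => [_ /eqP | x_v v_x]; first exact/negP.
by apply: x_v.
Qed.

Variable m : int.

(* A column is the duplicate-free list of its letters, which increase downwards; the
   box of [v] has parameter [m] plus the number of boxes below it. *)
Definition level (cs : seq nat) (v : nat) : int := m + (count (fun x => v < x)%N cs)%:Z.

Definition colmono (cs : seq nat) : mono := \sum_(v <- cs) box v (level cs v).

Definition is_column (p : nat) (cs : seq nat) : bool :=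
  [&& uniq cs, all (fun v => 0 < v <= n.*2)%N cs & size cs == p].

Lemma level_succ cs v : uniq cs -> v.+1 \in cs -> level cs v = level cs v.+1 + 1.
Proof.
move=> cs_uniq v1_in; rewrite /level.
have -> : count (fun x => v < x)%N cs =
          (count (fun x => v.+1 < x)%N cs + count (pred1 v.+1) cs)%N.
  rewrite -count_predUI (@eq_count _ (predI _ _) pred0) ?count_pred0 ?addn0 => [|x /=]; last lia.
  by apply: eq_count => x /=; lia.
by rewrite count_uniq_mem // v1_in; lia.
Qed.

Lemma level_relabel_other cs v x : x != v -> level (relabel v v.+1 cs) x = level cs x.
Proof.
move=> x_v; rewrite /level count_map; congr (m + _%:Z).
by apply: eq_count => y /=; case: eqP => // ->; lia.
Qed.

Lemma level_relabel_succ cs v :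
  v.+1 \notin cs -> level (relabel v v.+1 cs) v.+1 = level cs v.
Proof.
move=> v1_notin; rewrite /level count_map; congr (m + _%:Z).
apply: eq_in_count => y y_in /=; case: eqP => [-> | _]; first lia.
have y_v1 : y != v.+1 by apply: contraNneq v1_notin => <-.
lia.
Qed.

Lemma colmono_relabel cs v : uniq cs -> v \in cs -> v.+1 \notin cs -> (0 < v < n.*2)%N ->
  colmono (relabel v v.+1 cs) = colmono cs - A n (colour v) (level cs v + shift v).
Proof.
move=> cs_uniq v_in v1_notin v_range.
rewrite /colmono big_map !(bigD1_seq v) //= eqxx level_relabel_succ // box_succ //.
rewrite addrAC; congr (_ + _ - _); apply: eq_bigr => x /negbTE x_v.
by rewrite x_v level_relabel_other ?x_v.
Qed.

Lemma big_column (V : zmodType) p cs (F : nat -> V) : is_column p cs ->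
  \sum_(v <- cs) F v = \sum_(1 <= v < (n.*2).+1 | v \in cs) F v.
Proof.
case/and3P=> cs_uniq /allP cs_range _; rewrite -[RHS]big_filter; apply: perm_big.
apply: uniq_perm => [//| |x]; first exact/filter_uniq/iota_uniq.
rewrite mem_filter mem_index_iota andbC.
apply/idP/idP => [x_in | /andP[] //]; rewrite x_in /=; have := cs_range x x_in; lia.
Qed.

(* In [colmono cs], the box of [v] contributes +1 to the exponent of Y_i(t) iff
   [rises cs i t v], and the box of [v + 1] contributes -1 iff [falls cs i t v]. *)
Definition rises cs i t v : bool :=
  [&& v \in cs, colour v == i & level cs v + shift v == t].

Definition falls cs i t v : bool :=
  [&& v.+1 \in cs, colour v == i & level cs v.+1 + shift v + 1 == t].

Lemma coeff_colmono p cs i t : is_column p cs -> inI n i ->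
  coeff (i, t) (colmono cs) = \sum_(1 <= v < n.*2) ((rises cs i t v)%:R - (falls cs i t v)%:R).
Proof.
move=> cs_col iI; have /andP[i_gt0 le_in] := iI.
have [colour0 colour2n] : colour 0 = 0%N /\ colour n.*2 = 0%N.
  by rewrite /colour subnn; split=> //; case: ifP => //; lia.
rewrite raddf_sum (big_column _ cs_col) big_mkcond /=.
rewrite (eq_big_nat _ _ (F2 := fun v => (rises cs i t v)%:R - (falls cs i t v.-1)%:R)); last first.
  move=> v /andP[v_gt0 _]; rewrite /rises /falls prednK //.
  by case: (v \in cs); rewrite ?coeff_box ?subr0.
have [rises2n falls0] : rises cs i t n.*2 = false /\ falls cs i t 0 = false.
  by rewrite /rises /falls colour0 colour2n !(eq_sym 0%N) (gtn_eqF i_gt0) !andbF.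
rewrite sumrB big_nat_recr ?big_nat_recl /= ?rises2n ?falls0 ?addr0 ?add0r -?sumrB //; lia.
Qed.

Lemma rises_falls cs i t v : uniq cs -> v \in cs -> v.+1 \in cs ->
  rises cs i t v = falls cs i t v.
Proof.
by move=> cs_uniq v_in v1_in; rewrite /rises /falls v_in v1_in (level_succ cs_uniq v1_in) addrAC.
Qed.

Lemma colmono_coeff_gt0 p cs i t : is_column p cs -> inI n i -> 0 < coeff (i, t) (colmono cs) ->
  exists v, [/\ (0 < v < n.*2)%N, v \in cs, v.+1 \notin cs, colour v = i &
                level cs v + shift v = t].
Proof.
move=> cs_col iI; have /and3P[cs_uniq _ _] := cs_col.
rewrite (coeff_colmono t cs_col iI) => /sumr_gt0_witness[v].
rewrite mem_index_iota => v_range term_gt0.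
have /and3P[v_in /eqP colour_v /eqP level_v] : rises cs i t v.
  by move: term_gt0; case: (rises _ _ _ v); case: (falls _ _ _ v).
exists v; split=> //.
by apply: contraTN term_gt0 => v1_in; rewrite (rises_falls _ _ cs_uniq v_in v1_in) subrr ltxx.
Qed.

Lemma colmono_coeff_lt0 p cs i t : is_column p cs -> inI n i -> coeff (i, t) (colmono cs) < 0 ->
  exists v, [/\ (0 < v < n.*2)%N, v \notin cs, v.+1 \in cs, colour v = i &
                level cs v.+1 + shift v + 1 = t].
Proof.
move=> cs_col iI; have /and3P[cs_uniq _ _] := cs_col.
rewrite (coeff_colmono t cs_col iI) => /sumr_lt0_witness[v].
rewrite mem_index_iota => v_range term_lt0.
have /and3P[v1_in /eqP colour_v /eqP level_v] : falls cs i t v.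
  by move: term_lt0; case: (rises _ _ _ v); case: (falls _ _ _ v).
exists v; split=> //.
by apply: contraTN term_lt0 => v_in; rewrite (rises_falls _ _ cs_uniq v_in v1_in) subrr ltxx.
Qed.

Lemma is_column_relabel p cs v w : is_column p cs -> w \notin cs -> (0 < w <= n.*2)%N ->
  is_column p (relabel v w cs).
Proof.
case/and3P=> cs_uniq /allP cs_range /eqP <- w_notin w_range; apply/and3P; split.
- have neq_w x : x \in cs -> x != w by move=> x_in; apply: contraNneq w_notin => <-.
  rewrite map_inj_in_uniq // => x y x_in y_in.
  case: eqP => [-> | _]; case: eqP => [-> | _] //.
  + by move=> w_y; move: (neq_w y y_in); rewrite -w_y eqxx.
  + by move=> x_w; move: (neq_w x x_in); rewrite x_w eqxx.
- by apply/allP => _ /mapP[x x_in ->]; case: eqP => // _; apply: cs_range.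
- by rewrite size_map.
Qed.

Lemma colmono_subA p cs i t : is_column p cs -> inI n i -> 0 < coeff (i, t) (colmono cs) ->
  exists2 cs', is_column p cs' & colmono cs' = colmono cs - A n i t.
Proof.
move=> cs_col iI /(colmono_coeff_gt0 cs_col iI)[v [v_range v_in v1_notin <- <-]].
have /and3P[cs_uniq _ _] := cs_col.
exists (relabel v v.+1 cs); last exact: colmono_relabel.
by apply: is_column_relabel => //; lia.
Qed.

Lemma colmono_addA p cs i t : is_column p cs -> inI n i -> coeff (i, t + 1) (colmono cs) < 0 ->
  exists2 cs', is_column p cs' & colmono cs' = colmono cs + A n i t.
Proof.
move=> cs_col iI /(colmono_coeff_lt0 cs_col iI)[v [v_range v_notin v1_in <- /addIr level_v]].
have /and3P[cs_uniq _ _] := cs_col.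
set cs' := relabel v.+1 v cs.
have cs'_col : is_column p cs' by apply: is_column_relabel => //; lia.
have /and3P[cs'_uniq _ _] := cs'_col.
have v1_notin' : v.+1 \notin cs' by apply: relabel_notin; lia.
have := colmono_relabel cs'_uniq (mem_relabel v v1_in) v1_notin' v_range.
rewrite relabelK // -level_relabel_succ // relabelK // level_v => ->.
by exists cs'; rewrite ?subrK.
Qed.

Lemma colmono_cedge p cs N : is_column p cs -> cedge n (colmono cs) N ->
  exists2 cs', is_column p cs' & N = colmono cs'.
Proof.
move=> cs_col /cedge_coeff[i [t [iI [[t_gt0 ->] | [t1_lt0 ->]]]]].
  by have [cs' cs'_col <-] := colmono_subA cs_col iI t_gt0; exists cs'.
by have [cs' cs'_col <-] := colmono_addA cs_col iI t1_lt0; exists cs'.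
Qed.

Lemma level_iota p v : v \in iota 1 p -> level (iota 1 p) v = m + (p - v)%N.
Proof.
rewrite mem_iota => v_range; congr (m + _%:Z).
have -> : iota 1 p = iota 1 v ++ iota v.+1 (p - v) by rewrite -iotaD; congr iota; lia.
rewrite count_cat (eq_in_count (a2 := pred0)) => [|x]; last by rewrite mem_iota /=; lia.
rewrite count_pred0 (eq_in_count (a2 := predT)) => [|x]; last by rewrite mem_iota /=; lia.
by rewrite count_predT size_iota.
Qed.

Lemma colmono_iota p : (p <= n)%N -> colmono (iota 1 p) = Y n p m.
Proof.
move=> le_pn; pose u k := Y n k (m + (p - k)%N).
rewrite /colmono (eq_big_seq (fun v => u v - u v.-1)) => [|v v_in]; last first.
  have := v_in; rewrite mem_iota => v_range; rewrite level_iota // /box /u /colour /shift.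
  rewrite !ifT; try lia; congr (Y n _ _ - Y n _ _); lia.
rewrite (_ : iota 1 p = index_iota 1 p.+1); last by rewrite /index_iota subSS subn0.
rewrite big_add1 /= telescope_sumr // /u subnn addr0.
by rewrite /Y /inI /= subr0.
Qed.

Lemma is_column_iota p : (p <= n)%N -> is_column p (iota 1 p).
Proof.
move=> le_pn; rewrite /is_column iota_uniq size_iota eqxx andbT.
by apply/allP => v; rewrite mem_iota; lia.
Qed.

Lemma mcomp_column p u : inI n p -> mcomp n (Y n p m) u ->
  exists2 cs, is_column p cs & u = colmono cs.
Proof.
move=> /andP[_ le_pn]; elim=> [|M N _ [cs cs_col ->]]; last exact: colmono_cedge.
by exists (iota 1 p); rewrite ?is_column_iota ?colmono_iota.
Qed.

Lemma perm_colmono cs cs' : perm_eq cs cs' -> colmono cs = colmono cs'.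
Proof.
move=> eq_cs; rewrite /colmono (perm_big _ eq_cs); apply: eq_bigr => v _.
by rewrite /level (permP eq_cs).
Qed.

Lemma pred_closed_column_iota p cs : is_column p cs ->
  (forall w, w \in cs -> (1 < w)%N -> w.-1 \in cs) -> perm_eq cs (iota 1 p).
Proof.
case/and3P=> cs_uniq /allP cs_range /eqP <- closed.
have down x d : x \in cs -> (d < x)%N -> (x - d)%N \in cs.
  move=> x_in; elim: d => [|d IH] lt_dx; first by rewrite subn0.
  by rewrite subnS; apply: closed; [apply: IH | ]; lia.
have le_size x : x \in cs -> (x <= size cs)%N.
  move=> x_in; rewrite -(size_iota 1 x); apply: uniq_leq_size (iota_uniq 1 x) _ => k.
  by rewrite mem_iota => k_range; rewrite (_ : k = x - (x - k))%N; [apply: down | ]; lia.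
have sub_iota : {subset cs <= iota 1 (size cs)}.
  by move=> x x_in; rewrite mem_iota; have := cs_range x x_in; have := le_size x x_in; lia.
have [_ eq_cs] := uniq_min_size cs_uniq sub_iota (eq_leq (size_iota _ _)).
exact: uniq_perm cs_uniq (iota_uniq _ _) eq_cs.
Qed.

Lemma sumn_relabel_pred cs w : uniq cs -> w \in cs -> (0 < w)%N ->
  (sumn (relabel w w.-1 cs)).+1 = sumn cs.
Proof.
move=> cs_uniq w_in w_gt0; rewrite !sumnE big_map !(bigD1_seq w) //= eqxx.
rewrite -addSn prednK //; congr (_ + _)%N; apply: eq_bigr => x /negbTE x_w.
by rewrite x_w.
Qed.

Lemma colmono_sumA p cs : (p <= n)%N -> is_column p cs ->
  exists2 L, (forall x, x \in L -> inI n x.1 /\ m <= x.2) & colmono cs = Y n p m - sumA n L.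
Proof.
move=> le_pn; elim: {cs}_.+1 {-2}cs (ltnSn (sumn cs)) => // s IH cs lt_cs cs_col.
have /and3P[cs_uniq /allP cs_range _] := cs_col.
have [/hasP[w w_in /andP[lt1w w1_notin]] | /hasPn closed] :=
  boolP (has (fun w => (1 < w)%N && (w.-1 \notin cs)) cs); last first.
  exists [::]; rewrite // /sumA big_nil subr0 -colmono_iota //; apply: perm_colmono.
  apply: pred_closed_column_iota cs_col _ => w w_in lt1w.
  by have := closed w w_in; rewrite lt1w negbK.
have w_range := cs_range w w_in.
set cs' := relabel w w.-1 cs.
have cs'_col : is_column p cs' by apply: is_column_relabel => //; lia.
have /and3P[cs'_uniq _ _] := cs'_col.
have [|L L_ok cs'_eq] := IH cs' _ cs'_col.
  by rewrite -ltnS sumn_relabel_pred //; lia.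
exists ((colour w.-1, level cs' w.-1 + shift w.-1) :: L).
  move=> x; rewrite inE => /predU1P[-> | /L_ok //] /=; split.
    by apply: colour_inI; lia.
  by rewrite /level /shift; lia.
have w_gt0 : (0 < w)%N by apply: ltnW.
have w_notin' : w.-1.+1 \notin cs' by rewrite prednK //; apply: relabel_notin; lia.
have w1_range : (0 < w.-1 < n.*2)%N by lia.
have := colmono_relabel cs'_uniq (mem_relabel w.-1 w_in) w_notin' w1_range.
rewrite prednK // relabelK // => ->.
by rewrite cs'_eq /sumA big_cons /= opprD addrA addrAC.
Qed.

End Columns.

Theorem corollary5p11 (n : nat) (hn : (2 <= n)%N) (p q : nat)
    (hp : inI n p) (hq : inI n q) (m l : int) (hml : l <= m) (u v : mono) :
  mcomp n (Y n p m) u -> mcomp n (Y n q l) v -> highest n (u + v) ->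
  u = Y n p m.
Proof.
move=> /(mcomp_column hp)[cs cs_col ->] /(mcomp_column hq)[ds ds_col ->].
have [/andP[_ le_pn] /andP[_ le_qn]] := (hp, hq).
have [Lu Lu_ok ->] := colmono_sumA m le_pn cs_col.
have [Lv Lv_ok ->] := colmono_sumA l le_qn ds_col.
case: Lu Lu_ok => [|x0 Lu] Lu_ok; first by rewrite /sumA big_nil subr0.
rewrite addrACA -opprD -sumA_cat => uv_high.
exfalso; apply: (sub_sumA_not_highest (t0 := m) _ _ _ uv_high).
- move=> i k lt_mk; rewrite coeffD !coeff_Y.
  by rewrite (lt_eqF lt_mk) (lt_eqF (le_lt_trans hml lt_mk)) !andbF addr0.
- by exists x0; [rewrite mem_head | case: (Lu_ok x0 (mem_head _ _))].
- by move=> x; rewrite mem_cat => /orP[/Lu_ok[] | /Lv_ok[]].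
Qed.
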